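(* Let $G$ be a cubic graph of order $2n$ and let $\mathcal M=\{M_1,\ldots,M_t\}$ be a family of matchings of $G$ whose union is $E(G)$ and such that $\sum_{i=1}^t |M_i|=(n-1)t$. Then there exist $t$ matchings of $G$, each of size exactly $n-1$, whose union is $E(G)$.
   Context: All graphs are finite, simple, connected and cubic. *)

From mathcomp Require Import all_boot.
Set Implicit Arguments. Unset Strict Implicit. Unset Printing Implicit Defensive.

Definition simple_graph (T : finType) (e : rel T) : Prop :=
  symmetric e /\ irreflexive e.

Definition cubic (T : finType) (e : rel T) : Prop :=
  forall x : T, #|[set y | e x y]| = 3.

Definition connected_graph (T : finType) (e : rel T) : Prop :=
  forall x y : T, connect e x y.

Definition edges (T : finType) (e : rel T) : {set {set T}} :=
  [set A : {set T} | [exists x, exists y, e x y && (A == [set x; y])]].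

Definition matching (T : finType) (e : rel T) (M : {set {set T}}) : Prop :=
  M \subset edges e /\ trivIset M.

From mathcomp Require Import all_boot zify.
Set Implicit Arguments. Unset Strict Implicit. Unset Printing Implicit Defensive.

(* The key tool is an exchange lemma: if A and B are matchings with
   #|A| < #|B|, then A :|: B contains an augmenting component, and swapping it
   yields matchings of sizes #|A| + 1 and #|B| - 1 with the same union.  We
   prove it for arbitrary pairwise disjoint families X, Y of finite sets
   whose members in X have at most two points: by double counting, some
   member of Y meets at most one member of X, and induction on #|Y| produces
   a "separated pair" P \subset X, Q \subset Y with #|Q| = #|P| + 1 that can be
   exchanged.

   Since the sizes average m, while they are not all equal to m some matching
   is smaller and another larger than m; one exchange between them preserves
   the cover and the total size and lowers the total deviation from m, so
   iterating terminates with all sizes equal to m. *)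

Section DisjointFamilies.

Variable T : finType.
Implicit Types (x y : {set T}) (X Y P Q : {set {set T}}).

Definition meeting Y x : {set {set T}} := [set y in Y | ~~ [disjoint x & y]].

Lemma meetingE Y x y : (y \in meeting Y x) = (y \in Y) && ~~ [disjoint x & y].
Proof. by rewrite inE. Qed.

(* Counting, for a pairwise disjoint Y, the pairs (y, v) with v in x :&: y:
   every member meeting x contains a point of x, and distinct members contain
   distinct points, so at most #|x| members of Y meet x. *)
Lemma card_meeting Y x : trivIset Y -> #|meeting Y x| <= #|x|.
Proof.
move=> /trivIsetP disjY; rewrite -sum1_card -[#|x|]sum1_card.
apply: (@leq_trans (\sum_(y in meeting Y x) \sum_(v in x) (v \in y : nat))).
  apply: leq_sum => y; rewrite meetingE -setI_eq0 => /andP[_ /set0Pn[v]].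
  by rewrite inE => /andP[vx vy]; rewrite (bigD1 v) //= vy.
rewrite exchange_big /=; apply: leq_sum => v _.
rewrite -big_mkcondr sum1_card; apply/card_le1_eqP => a b.
move=> /andP[+ va] /andP[+ vb]; rewrite !meetingE => /andP[aY _] /andP[bY _].
apply: contraTeq isT => neq_ab; have := disjY b a bY aY neq_ab.
by move/disjointFr => /(_ v vb); rewrite va.
Qed.

(* Double counting the meeting pairs: if the members of X have at most two
   points and Y is a pairwise disjoint family larger than X, then some member
   of Y meets at most one member of X. *)
Lemma exists_light_member X Y :
  {in X, forall x, #|x| <= 2} -> trivIset Y -> #|X| < #|Y| ->
  exists2 y, y \in Y & #|meeting X y| <= 1.
Proof.
move=> smallX disjY ltXY.
have meeting_count Z z : #|meeting Z z| = \sum_(w in Z) (~~ [disjoint z & w] : nat).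
  by rewrite -sum1dep_card big_mkcondr; apply: eq_bigr => w _; case: (~~ _).
have total : \sum_(y in Y) #|meeting X y| <= 2 * #|X|.
  under eq_bigr => y _ do rewrite meeting_count.
  rewrite exchange_big /= mulnC -sum_nat_const; apply: leq_sum => x xX.
  under eq_bigr => y _ do rewrite disjoint_sym.
  by rewrite -meeting_count (leq_trans (card_meeting x disjY)) ?smallX.
apply/exists_inP; apply: contraT => /exists_inPn heavy.
have : \sum_(y in Y) 2 <= \sum_(y in Y) #|meeting X y|.
  by apply: leq_sum => y /heavy; rewrite -ltnNge.
rewrite sum_nat_const => /(leq_trans)/(_ total).
by rewrite mulnC leq_pmul2l // leqNgt ltXY.
Qed.

(* The
   components of X :|: Y exchanged along an augmenting path have this shape. *)
Definition separated X Y P Q : Prop :=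
  [/\ P \subset X, Q \subset Y,
      {in X :\: P & Q, forall x q : {set T}, [disjoint x & q]} &
      {in Y :\: Q & P, forall y p : {set T}, [disjoint y & p]}].

(* The notion is symmetric, so one exchange lemma serves both families. *)
Lemma separated_sym X Y P Q : separated X Y P Q -> separated Y X Q P.
Proof. by case. Qed.

Section Extend.

(* Setting of the inductive step: y is a member of Y meeting exactly one
   member x of X, and (P, Q) is separated for the families without x and y. *)
Variables (X Y P Q : {set {set T}}) (x y : {set T}).
Hypotheses (xX : x \in X) (yY : y \in Y) (only_x : meeting X y = [set x]).
Hypothesis sepPQ : separated (X :\ x) (Y :\ y) P Q.

Lemma meets_only_x x' : x' \in X -> ~~ [disjoint y & x'] -> x' = x.
Proof. by move=> x'X meet; apply/set1P; rewrite -only_x meetingE x'X. Qed.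

Lemma x_meets_y : ~~ [disjoint x & y].
Proof. by have := set11 x; rewrite -only_x meetingE disjoint_sym => /andP[]. Qed.

Lemma separated_keep :
  {in Q, forall q : {set T}, [disjoint x & q]} -> separated X Y P Q.
Proof.
case: sepPQ => sPX sQY sepX sepY x_avoids; split.
- exact: subset_trans sPX (subD1set X x).
- exact: subset_trans sQY (subD1set Y y).
- move=> x' q; rewrite in_setD => /andP[x'P x'X] qQ.
  have [->|x'x] := eqVneq x' x; first exact: x_avoids.
  by apply: sepX; rewrite // in_setD x'P in_setD1 x'x.
- move=> y' p; rewrite in_setD => /andP[y'Q y'Y] pP.
  have [->|y'y] := eqVneq y' y; last by apply: sepY; rewrite // in_setD y'Q in_setD1 y'y.
  move: (subsetP sPX p pP); rewrite in_setD1 => /andP[px pX].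
  by apply: contraT => /(meets_only_x pX) pxE; rewrite pxE eqxx in px.
Qed.

(* If x meets some q0 in Q, then x and y join the pair: any other member of Y
   meeting x would be a third member of Y meeting the two-point set x. *)
Lemma separated_add q0 : trivIset Y -> #|x| <= 2 ->
  q0 \in Q -> ~~ [disjoint x & q0] -> separated X Y (x |: P) (y |: Q).
Proof.
case: sepPQ => sPX sQY sepX sepY disjY small_x q0Q x_meets_q0; split.
- by rewrite subUset sub1set xX (subset_trans sPX) ?subD1set.
- by rewrite subUset sub1set yY (subset_trans sQY) ?subD1set.
- move=> x' q; rewrite in_setD in_setU1 negb_or => /andP[/andP[x'x x'P] x'X].
  case/setU1P => [->|qQ]; last by apply: sepX; rewrite // in_setD x'P in_setD1 x'x.
  apply: contraT => meet; rewrite disjoint_sym in meet.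
  by rewrite (meets_only_x x'X meet) eqxx in x'x.
- move=> y' p; rewrite in_setD in_setU1 negb_or => /andP[/andP[y'y y'Q] y'Y].
  case/setU1P => [->|pP]; last by apply: sepY; rewrite // in_setD y'Q in_setD1 y'y.
  apply: contraT => meet; rewrite disjoint_sym in meet.
  suff : 2 < #|meeting Y x|.
    by rewrite ltnNge (leq_trans (card_meeting x disjY) small_x).
  have q0Y : q0 \in Y :\ y := subsetP sQY q0 q0Q.
  move: q0Y; rewrite in_setD1 => /andP[q0y q0Y].
  apply/card_gt2P; exists y, q0, y'; rewrite !meetingE yY q0Y y'Y x_meets_y.
  rewrite x_meets_q0 meet eq_sym q0y y'y; split=> //; split=> //.
  by apply: contraNneq y'Q => <-.
Qed.

End Extend.

(* The augmenting-path lemma for families of small sets: if the members of X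
   have at most two points, X and Y are pairwise disjoint and #|X| < #|Y|,
   there is a separated pair (P, Q) with one more member in Q than in P.
   Induction on #|Y|: remove a light member y of Y and the member x of X it
   meets (if any), and extend the pair found for the smaller families. *)
Lemma separated_augmenting X Y :
  {in X, forall x, #|x| <= 2} -> trivIset X -> trivIset Y -> #|X| < #|Y| ->
  exists P Q, separated X Y P Q /\ #|Q| = #|P|.+1.
Proof.
move: {2}#|Y| (leqnn #|Y|) => k; elim: k X Y => [|k IH] X Y leYk smallX disjX disjY ltXY.
  by move: (leq_trans ltXY leYk).
have [y yY] := exists_light_member smallX disjY ltXY.
rewrite leq_eqVlt ltnS leqn0 cards_eq0 => /orP[/cards1P[x only_x] | /eqP none].
  have xX : x \in X by have := set11 x; rewrite -only_x meetingE => /andP[].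
  have cardY : #|Y| = #|Y :\ y|.+1 by rewrite (cardsD1 y Y) yY.
  have cardX : #|X| = #|X :\ x|.+1 by rewrite (cardsD1 x X) xX.
  have [|||||P [Q [sepPQ cardPQ]]] := IH (X :\ x) (Y :\ y).
  - by rewrite -ltnS -cardY.
  - by move=> z /setD1P[_ /smallX].
  - exact: trivIsetS (subD1set X x) disjX.
  - exact: trivIsetS (subD1set Y y) disjY.
  - by rewrite -ltnS -cardX -cardY.
  have [xP yQ] : x \notin P /\ y \notin Q.
    by case: sepPQ => sP sQ _ _; split; apply/negP;
      [move/(subsetP sP) | move/(subsetP sQ)]; rewrite in_setD1 eqxx.
  have [/exists_inP[q0 q0Q meet] | /exists_inPn avoid] :=
    boolP [exists q in Q, ~~ [disjoint x & q]].
    exists (x |: P), (y |: Q); split; last by rewrite !cardsU1 xP yQ cardPQ.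
    exact: separated_add only_x sepPQ q0 disjY (smallX x xX) q0Q meet.
  exists P, Q; split=> //; apply: separated_keep only_x sepPQ _ => q /avoid.
  by rewrite negbK.
exists set0, [set y]; split; last by rewrite cards0 cards1.
split=> [||x' q|? ?]; rewrite ?sub0set ?sub1set ?inE //= => x'X /eqP ->.
apply: contraT => meet; have : x' \in meeting X y by rewrite meetingE x'X disjoint_sym.
by rewrite none inE.
Qed.

Lemma trivIset_exchange X Y P Q : trivIset X -> trivIset Y ->
  separated X Y P Q -> trivIset ((X :\: P) :|: Q).
Proof.
move=> /trivIsetP disjX /trivIsetP disjY [_ sQY sepX _].
apply/trivIsetP => a b /setUP[aXP | aQ] /setUP[bXP | bQ].
- by apply: disjX; [case/setDP: aXP | case/setDP: bXP].
- by move=> _; apply: sepX.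
- by move=> _; rewrite disjoint_sym; apply: sepX.
- by apply: disjY; apply: (subsetP sQY).
Qed.

Lemma card_exchange X Y P Q : set0 \notin Y -> separated X Y P Q ->
  #|(X :\: P) :|: Q| = #|X| - #|P| + #|Q|.
Proof.
move=> Y_nonempty [sPX sQY sepX _].
suff disj : (X :\: P) :&: Q = set0 by rewrite cardsU disj cards0 subn0 cardsDS.
apply/setP => q; rewrite inE [q \in set0]inE; apply/negP => /andP[qXP qQ].
have := sepX q q qXP qQ; rewrite -setI_eq0 setIid => /eqP q0.
by move: Y_nonempty; rewrite -q0 (subsetP sQY q qQ).
Qed.

Lemma union_exchange X Y P Q : P \subset X -> Q \subset Y ->
  ((X :\: P) :|: Q) :|: ((Y :\: Q) :|: P) = X :|: Y.
Proof.
move=> sPX sQY; apply/setP => z; rewrite !inE.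
have [zP|zP] := boolP (z \in P); have [zQ|zQ] := boolP (z \in Q);
  by rewrite ?(subsetP sPX z zP) ?(subsetP sQY z zQ) /= ?orbT ?orbF.
Qed.

End DisjointFamilies.

Lemma edge_card (T : finType) (e : rel T) (A : {set T}) :
  A \in edges e -> #|A| <= 2.
Proof.
by rewrite inE => /existsP[x /existsP[y /andP[_ /eqP ->]]]; rewrite cards2; case: (_ != _).
Qed.

Lemma set0_notin_edges (T : finType) (e : rel T) : set0 \notin edges e.
Proof.
apply/negP; rewrite inE => /existsP[x /existsP[y /andP[_ /eqP /setP /(_ x)]]].
by rewrite !inE eqxx.
Qed.

Lemma matching_exchange (T : finType) (e : rel T) (A B : {set {set T}}) :
  matching e A -> matching e B -> #|A| < #|B| ->
  exists A' B', [/\ matching e A', matching e B', #|A'| = #|A|.+1,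
    #|B'| = #|B|.-1 & A' :|: B' = A :|: B].
Proof.
move=> [eA disjA] [eB disjB] ltAB.
have smallA : {in A, forall x : {set T}, #|x| <= 2}.
  by move=> x /(subsetP eA) /edge_card.
have [P [Q [sepPQ cardPQ]]] := separated_augmenting smallA disjA disjB ltAB.
have [sPA sQB _ _] := sepPQ.
have nonempty (Z : {set {set T}}) : Z \subset edges e -> set0 \notin Z.
  by move=> sZ; apply/negP => /(subsetP sZ); apply/negP; apply: set0_notin_edges.
exists ((A :\: P) :|: Q), ((B :\: Q) :|: P); split.
- split; first by rewrite subUset (subset_trans (subsetDl A P) eA) (subset_trans sQB eB).
  exact: trivIset_exchange disjA disjB sepPQ.
- split; first by rewrite subUset (subset_trans (subsetDl B Q) eB) (subset_trans sPA eA).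
  exact: trivIset_exchange disjB disjA (separated_sym sepPQ).
- rewrite (card_exchange (nonempty B eB) sepPQ) cardPQ.
  by have := subset_leq_card sPA; lia.
- rewrite (card_exchange (nonempty A eA) (separated_sym sepPQ)) cardPQ.
  by have := subset_leq_card sQB; lia.
- exact: union_exchange.
Qed.

Lemma big_split2 (R : Type) (idx : R) (op : Monoid.com_law idx) (I : finType)
  (F G : I -> R) (i j : I) : i != j ->
  (forall k, k != i -> k != j -> G k = F k) ->
  \big[op/idx]_k G k = op (G i) (op (G j) (\big[op/idx]_(k | (k != i) && (k != j)) F k)).
Proof.
move=> neq_ij eqGF; rewrite (bigD1 i) //= (bigD1 j) /=; last by rewrite eq_sym.
by congr (op _ (op _ _)); apply: eq_bigr => k /andP[]; apply: eqGF.
Qed.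

Lemma sum_eq_le (I : finType) (a b : I -> nat) :
  (forall i, a i <= b i) -> \sum_i a i = \sum_i b i -> forall i, a i = b i.
Proof.
move=> le_ab eq_sum i; have := leqif_sum (fun k (_ : true) => leqif_eq (le_ab k)).
by move=> [_]; rewrite eq_sum eqxx => /esym/forall_inP/(_ i isT)/eqP.
Qed.

Lemma straddle_mean t (s : 'I_t -> nat) (m : nat) (k : 'I_t) :
  \sum_i s i = m * t -> s k != m -> exists i j, s i < m /\ m < s j.
Proof.
move=> sum_s sk; have sum_m : \sum_(i < t) m = m * t.
  by rewrite sum_nat_const card_ord mulnC.
have one_sided : (forall i, m <= s i) \/ (forall i, s i <= m) -> s k = m.
  case=> le_sm; first by apply/esym/(sum_eq_le le_sm); rewrite sum_s.
  by apply: (sum_eq_le le_sm); rewrite sum_s.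
have [i lt_i] : exists i, s i < m.
  apply/existsP; apply: contraNT sk => /existsPn ge_m; apply/eqP/one_sided.
  by left=> i; rewrite leqNgt ge_m.
have [j lt_j] : exists j, m < s j.
  apply/existsP; apply: contraNT sk => /existsPn le_m; apply/eqP/one_sided.
  by right=> j; rewrite leqNgt le_m.
by exists i, j.
Qed.

Definition deviation t (m : nat) (s : 'I_t -> nat) : nat :=
  \sum_(i < t) ((s i - m) + (m - s i)).

Lemma transfer_unit t m (s s' : 'I_t -> nat) (i j : 'I_t) : i != j ->
  s i < m -> m < s j -> s' i = (s i).+1 -> s' j = (s j).-1 ->
  (forall k, k != i -> k != j -> s' k = s k) ->
  \sum_k s' k = \sum_k s k /\ deviation m s' < deviation m s.
Proof.
move=> neq_ij lt_i lt_j s'_i s'_j s'_rest.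
have dev_rest k : k != i -> k != j ->
    (s' k - m) + (m - s' k) = (s k - m) + (m - s k) by move=> ki kj; rewrite s'_rest.
rewrite /deviation (big_split2 _ neq_ij s'_rest) (big_split2 _ neq_ij dev_rest).
rewrite (big_split2 _ neq_ij (fun k _ _ => erefl (s k))).
rewrite (big_split2 _ neq_ij (fun k _ _ => erefl ((s k - m) + (m - s k)))) /=.
by rewrite s'_i s'_j; split; lia.
Qed.

Section Balancing.

Variables (T : finType) (e : rel T) (m t : nat).
Implicit Type M : 'I_t -> {set {set T}}.

Definition balanced_cover M : Prop :=
  [/\ forall i, matching e (M i), \bigcup_(i < t) M i = edges e &
      \sum_(i < t) #|M i| = m * t].

Definition defect M : nat := deviation m (fun i => #|M i|).

Lemma rebalance M k0 : balanced_cover M -> #|M k0| != m ->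
  exists N, balanced_cover N /\ defect N < defect M.
Proof.
case=> match_M cover_M sum_M size_k0.
have [i [j [lt_i lt_j]]] := straddle_mean sum_M size_k0.
have neq_ij : i != j by apply: contraTneq lt_i => ->; rewrite -leqNgt ltnW.
have [A [B [match_A match_B card_A card_B AB]]] :=
  matching_exchange (match_M i) (match_M j) (ltn_trans lt_i lt_j).
pose N k := if k == i then A else if k == j then B else M k.
have [Ni Nj] : N i = A /\ N j = B by rewrite /N eqxx eq_sym (negbTE neq_ij) eqxx.
have N_rest k : k != i -> k != j -> N k = M k.
  by move=> ki kj; rewrite /N (negbTE ki) (negbTE kj).
have [sum_N lt_defect] : \sum_k #|N k| = \sum_k #|M k| /\ defect N < defect M.
  apply: transfer_unit neq_ij lt_i lt_j _ _ _; rewrite ?Ni ?Nj //.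
  by move=> k ki kj; rewrite N_rest.
exists N; split=> //; split.
- by move=> k; rewrite /N; case: (k == i) => //; case: (k == j).
- rewrite -cover_M (big_split2 _ neq_ij N_rest).
  by rewrite (big_split2 _ neq_ij (fun k _ _ => erefl (M k))) /= Ni Nj !setUA AB.
- by rewrite sum_N.
Qed.

Theorem balance_matchings M : balanced_cover M ->
  exists N, (forall i, matching e (N i) /\ #|N i| = m) /\
            \bigcup_(i < t) N i = edges e.
Proof.
move: {2}(defect M).+1 (ltnSn (defect M)) => d.
elim: d M => // d IH M lt_d cover_M.
have [k size_k | all_m] := pickP (fun k => #|M k| != m).
  have [N [cover_N lt_defect]] := rebalance cover_M size_k.
  by apply: IH cover_N; apply: leq_trans lt_defect _.
case: cover_M => match_M cover_M _; exists M; split=> // i; split=> //.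
by apply/eqP; rewrite -[_ == _]negbK all_m.
Qed.

End Balancing.

Theorem lemma1 (T : finType) (e : rel T) (n t : nat)
  (Hsimple : simple_graph e) (Hcubic : cubic e) (Hconn : connected_graph e)
  (Horder : #|T| = 2 * n)
  (M : 'I_t -> {set {set T}})
  (HM : forall i, matching e (M i))
  (Hunion : \bigcup_(i < t) M i = edges e)
  (Hsum : \sum_(i < t) #|M i| = (n - 1) * t) :
  exists N : 'I_t -> {set {set T}},
    (forall i, matching e (N i) /\ #|N i| = n - 1) /\
    \bigcup_(i < t) N i = edges e.
Proof. by apply: balance_matchings; split. Qed.
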